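(* Let $R$ be a ring with enough idempotents and let $f^2=f\in R$ be such that the right ideal $fR$ is faithful, i.e. $\{r\in R: fRr=0\}=0$. Let $\rho:R\to R\,\mathrm{End}_{fRf}(fR)$ be the canonical map $r\mapsto\rho_r$, where $(x)\rho_r=xr$. Then: (a) $\rho$ is an injective ring homomorphism, and $R\,\mathrm{End}_{fRf}(fR)$ is a left quotient ring of $R$ via $\rho$. (b) If $e^2=e\in R$ and $Re$ is injective in $R\mathrm{Mod}$, then $R\,\mathrm{Hom}_{fRf}(fR,fRe)\cong Re$ as left $R$-modules, and $fRe$ is an injective left $fRf$-module.
   Context: All rings are associative, not necessarily unital. Morphisms are written on the right of their arguments. - $R$ has enough idempotents if there are pairwise orthogonal idempotents $q_\alpha$ with $R=\bigoplus Rq_\alpha=\bigoplus q_\alpha R$. - $R\mathrm{Mod}$ is the category of unitary left modules ($RM=M$). - For a left $fRf$-module $X$, $\mathrm{Hom}_{fRf}(fR,X)$ is a left $R$-module via $(x)(r\varphi)=(xr)\varphi$. $R\,\mathrm{Hom}_{fRf}(fR,X)$ denotes its unitary part $R\cdot\mathrm{Hom}_{fRf}(fR,X)$, and $R\,\mathrm{End}_{fRf}(fR)=R\cdot\mathrm{End}_{fRf}(fR)$, which is a ring. - A ring $Q$ containing a subring $R'$ is a left quotient ring of $R'$ if ${}_{R'}Q$ is a rational extension of ${}_{R'}R'$. That is, for every $R'\subseteq D\subseteq Q$ and every $R'$-homomorphism $g:D\to Q$ with $R'\subseteq\ker g$, one has $g=0$. *)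

(* Non-unital rings are encoded as a MathComp zmodType R
   together with an explicit multiplication  mul : R -> R -> R  satisfying
   associativity and both distributive laws (MathComp rings are unital, so
   they cannot be used directly). *)
From HB Require Import structures.
From mathcomp Require Import all_boot all_order all_algebra.
Set Implicit Arguments. Unset Strict Implicit. Unset Printing Implicit Defensive.
Import GRing.Theory.
Local Open Scope ring_scope.

Record rng_axioms (R : zmodType) (mul : R -> R -> R) : Prop := {
  rng_mulA : forall x y z, mul x (mul y z) = mul (mul x y) z;
  rng_mulDl : forall x y z, mul (x + y) z = mul x z + mul y z;
  rng_mulDr : forall x y z, mul x (y + z) = mul x y + mul x z }.

(* left modules (over a subset S of R, e.g. S = R or S = fRf) *)
Record lmodule (R : zmodType) := LModule { mcar : zmodType; mact : R -> mcar -> mcar }.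

Section Defs.
Variables (R : zmodType) (mul : R -> R -> R).

Section Sums.
Variables (I : Type) (P : I -> R -> Prop).
Definition sum_generates : Prop :=
  forall r : R, exists n (a : 'I_n -> I) (x : 'I_n -> R),
    (forall i, P (a i) (x i)) /\ r = \sum_(i < n) x i.
Definition sum_independent : Prop :=
  forall n (a : 'I_n -> I) (x : 'I_n -> R), injective a ->
    (forall i, P (a i) (x i)) -> \sum_(i < n) x i = 0 -> forall i, x i = 0.
Definition internal_direct_sum : Prop := sum_generates /\ sum_independent.
End Sums.

Definition enough_idempotents : Prop :=
  exists (I : Type) (q : I -> R),
    (forall a, mul (q a) (q a) = q a) /\
    (forall a b, a <> b -> mul (q a) (q b) = 0) /\
    internal_direct_sum (fun a x => exists s, x = mul s (q a)) /\
    internal_direct_sum (fun a x => exists s, x = mul (q a) s).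

Definition in_Re (e x : R) : Prop := exists r, x = mul r e.
Definition in_fR (f x : R) : Prop := exists r, x = mul f r.
Definition in_fRf (f x : R) : Prop := exists r, x = mul (mul f r) f.
Definition in_fRe (f e x : R) : Prop := exists r, x = mul (mul f r) e.

(* ---------- Hom_{fRf}(fR, X) for a left fRf-submodule X of R ----------
   A map phi : fR -> X is represented by its canonical extension to R,
   x |-> phi (f x)  (x |-> f x is the projection of R onto fR); so a
   function phi : R -> R represents an element of Hom_{fRf}(fR,X) iff
   phi x = phi (f x) for all x, and its restriction to fR is additive,
   fRf-linear and X-valued.  Maps are written on the right, as in the paper. *)
Variable f : R.

Definition is_hom (X : R -> Prop) (phi : R -> R) : Prop :=
  (forall x, phi x = phi (mul f x)) /\
  (forall x y, in_fR f x -> in_fR f y -> phi (x + y) = phi x + phi y) /\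
  (forall a x, in_fRf f a -> in_fR f x -> phi (mul a x) = mul a (phi x)) /\
  (forall x, in_fR f x -> X (phi x)).

Definition hadd (phi psi : R -> R) : R -> R := fun x => phi x + psi x.
Definition hopp (phi : R -> R) : R -> R := fun x => - phi x.
Definition hzero : R -> R := fun _ => 0.
Definition hmul (phi psi : R -> R) : R -> R := fun x => psi (phi x).
Definition hact (r : R) (phi : R -> R) : R -> R := fun x => phi (mul x r).

(* the unitary part R Hom_{fRf}(fR, X) = R . Hom_{fRf}(fR, X) *)
Definition in_RHom (X : R -> Prop) (phi : R -> R) : Prop :=
  exists n (r : 'I_n -> R) (psi : 'I_n -> R -> R),
    (forall i, is_hom X (psi i)) /\
    (forall x, phi x = \sum_(i < n) hact (r i) (psi i) x).

Definition rho (r : R) : R -> R := fun x => mul (mul f x) r.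

(* Q is a left quotient ring of its subring R' : Q is a rational extension
   of R' as left R'-modules (R' acting by left multiplication in Q). *)
Definition left_quotient_ring (Q R' : (R -> R) -> Prop) : Prop :=
  forall D : (R -> R) -> Prop,
    (forall u, R' u -> D u) -> (forall u, D u -> Q u) ->
    D hzero -> (forall u v, D u -> D v -> D (hadd u v)) ->
    (forall u, D u -> D (hopp u)) ->
    (forall s u, R' s -> D u -> D (hmul s u)) ->
    forall g : (R -> R) -> (R -> R),
      (forall u, D u -> Q (g u)) ->
      (forall u v, D u -> D v -> g (hadd u v) = hadd (g u) (g v)) ->
      (forall s u, R' s -> D u -> g (hmul s u) = hmul s (g u)) ->
      (forall u, R' u -> g u = hzero) ->
      forall u, D u -> g u = hzero.
End Defs.

Section Inj.
Variables (R : zmodType) (mul : R -> R -> R) (S : R -> Prop).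

Definition is_lmod (M : lmodule R) : Prop :=
  (forall a (m m' : mcar M), S a -> mact a (m + m') = mact a m + mact a m') /\
  (forall a b (m : mcar M), S a -> S b -> mact (a + b) m = mact a m + mact b m) /\
  (forall a b (m : mcar M), S a -> S b -> mact (mul a b) m = mact a (mact b m)).

Definition unitary (M : lmodule R) : Prop :=
  forall m : mcar M, exists n (a : 'I_n -> R) (x : 'I_n -> mcar M),
    (forall i, S (a i)) /\ m = \sum_(i < n) mact (a i) (x i).

Definition is_mhom (M N : lmodule R) (h : mcar M -> mcar N) : Prop :=
  (forall m m', h (m + m') = h m + h m') /\
  (forall a m, S a -> h (mact a m) = mact a (h m)).

Definition is_mhom_to (X : R -> Prop) (M : lmodule R) (h : mcar M -> R) : Prop :=
  (forall m, X (h m)) /\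
  (forall m m', h (m + m') = h m + h m') /\
  (forall a m, S a -> h (mact a m) = mul a (h m)).

Definition injective_submod (X : R -> Prop) : Prop :=
  forall (A B : lmodule R), is_lmod A -> unitary A -> is_lmod B -> unitary B ->
    forall i : mcar A -> mcar B, is_mhom i -> injective i ->
    forall g : mcar A -> R, is_mhom_to X g ->
    exists h : mcar B -> R, is_mhom_to X h /\ forall a, h (i a) = g a.
End Inj.

(* Write rho_y for the map x |-> (f x) y; faithfulness of fR makes rho injective.
   (a) For u in R End(fR) and t in R, the product of rho_(f t) and u is rho_(u t).
   Hence if g vanishes on rho(R) and commutes with left multiplication by rho(R),
   then rho_(g(u)(t)) = g(rho_(f t) u) = 0, i.e. g(u) = 0.
   (b) Every element of R Hom(fR, fRe) is rho_y for a unique y in Re, and the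
   inverse of rho is the isomorphism. For one psi in Hom(fR, fRe), the map
   m |-> (the y with m psi = rho_y) is R-linear on the left ideal RfR; injectivity
   of Re extends it to h : R -> Re, and then r psi = rho_(h r) for every r.
   Injectivity of fRe is transported the same way: an fRf-map g : A -> fRe induces
   an R-map Rf ⊗_{fRf} A -> Re, which extends over Rf ⊗_{fRf} B since Re is
   injective, and b |-> f h(f ⊗ b) extends g. *)

From Pilot Require Import Defs.
From HB Require Import structures.
From mathcomp Require Import all_boot all_order all_algebra.
From mathcomp Require Import boolp classical_sets functions.
Set Implicit Arguments. Unset Strict Implicit. Unset Printing Implicit Defensive.
Import GRing.Theory.
Local Open Scope ring_scope.

Section AdditiveMorph.
Variables (U V : zmodType) (h : U -> V).
Hypothesis hD : {morph h : x y / x + y}.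

Lemma morph_add0 : h 0 = 0.
Proof. by apply: (@addrI _ (h 0)); rewrite -hD !addr0. Qed.

Lemma morph_addN x : h (- x) = - h x.
Proof. by apply: (@addrI _ (h x)); rewrite -hD !subrr morph_add0. Qed.

Lemma morph_add_sum I (r : seq I) (P : pred I) (F : I -> U) :
  h (\sum_(i <- r | P i) F i) = \sum_(i <- r | P i) h (F i).
Proof. exact: (big_morph h hD morph_add0). Qed.
End AdditiveMorph.

(* Bundling the closure proofs with a Prop-valued predicate makes [subzmod P] a
   canonical zmodType. *)
Record zmod_prop (Z : zmodType) := ZmodProp {
  zmod_prop_pred :> Z -> Prop;
  zmod_prop0 : zmod_prop_pred 0;
  zmod_propB : forall x y, zmod_prop_pred x -> zmod_prop_pred y -> zmod_prop_pred (x - y) }.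

Section SubZmod.
Variables (Z : zmodType) (P : zmod_prop Z).

Definition zmod_prop_mem : {pred Z} := fun x => `[< P x >].

Fact zmod_prop_mem_closed : zmod_closed zmod_prop_mem.
Proof.
split; first exact/asboolP/zmod_prop0.
by move=> x y /asboolP Px /asboolP Py; apply/asboolP; exact: zmod_propB.
Qed.

HB.instance Definition _ := GRing.isZmodClosed.Build Z zmod_prop_mem zmod_prop_mem_closed.
Record subzmod := SubZmod { subzmod_val :> Z; _ : subzmod_val \in zmod_prop_mem }.
HB.instance Definition _ := [isSub for subzmod_val].
HB.instance Definition _ := [Choice of subzmod by <:].
HB.instance Definition _ := [SubChoice_isSubZmodule of subzmod by <:].

Lemma subzmodP (x : subzmod) : P (val x).
Proof. by case: x => x /= /asboolP. Qed.

Definition insubzmod x (Px : P x) : subzmod := SubZmod (asboolT Px).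
End SubZmod.

Section Submodule.
Variables (R Z : zmodType) (P : zmod_prop Z) (act : R -> Z -> Z).
Hypothesis actP : forall a x, P x -> P (act a x).

Definition subact a (x : subzmod P) : subzmod P := insubzmod (actP a (subzmodP x)).
Definition submod : lmodule R := @LModule R (subzmod P) subact.

Lemma is_lmod_submod (mul : R -> R -> R) (S : R -> Prop) :
  (forall a x y, S a -> P x -> P y -> act a (x + y) = act a x + act a y) ->
  (forall a b x, S a -> S b -> P x -> act (a + b) x = act a x + act b x) ->
  (forall a b x, S a -> S b -> P x -> act (mul a b) x = act a (act b x)) ->
  is_lmod mul S submod.
Proof.
move=> actDr actDl actM; split; [|split] => a.
- by move=> x y Sa; apply: val_inj; exact: actDr (subzmodP x) (subzmodP y).
- by move=> b x Sa Sb; apply: val_inj; exact: actDl (subzmodP x).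
- by move=> b x Sa Sb; apply: val_inj; exact: actM (subzmodP x).
Qed.

Lemma unitary_submod (S : R -> Prop) :
  (forall x, P x -> exists n (a : 'I_n -> R) (y : 'I_n -> Z),
     [/\ forall i, S (a i), forall i, P (y i) & x = \sum_(i < n) act (a i) (y i)]) ->
  unitary S submod.
Proof.
move=> span m; have [n [a [y [Sa Py Em]]]] := span _ (subzmodP m).
exists n, a, (fun i => insubzmod (Py i)); split => //.
by apply: val_inj; rewrite raddf_sum; exact: Em.
Qed.
End Submodule.

Section Rng.
Variables (R : zmodType) (mul : R -> R -> R).
Hypothesis ax : rng_axioms mul.
Local Notation "a ** b" := (mul a b) (at level 40, left associativity).

Lemma rmulA x y z : x ** (y ** z) = x ** y ** z.
Proof. exact: rng_mulA. Qed.

Lemma rmulDl z : {morph mul^~ z : x y / x + y}.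
Proof. by move=> x y; apply: rng_mulDl. Qed.

Lemma rmulDr x : {morph mul x : y z / y + z}.
Proof. exact: rng_mulDr. Qed.

Lemma rmul0l z : 0 ** z = 0.
Proof. exact: morph_add0 (rmulDl z). Qed.

Lemma rmul0r x : x ** 0 = 0.
Proof. exact: morph_add0 (rmulDr x). Qed.

Lemma rmulNl x z : (- x) ** z = - (x ** z).
Proof. exact: morph_addN (rmulDl z) x. Qed.

Lemma rmulNr x z : x ** (- z) = - (x ** z).
Proof. exact: morph_addN (rmulDr x) z. Qed.

Lemma rmul_sumr I (r : seq I) (P : pred I) (F : I -> R) x :
  x ** (\sum_(i <- r | P i) F i) = \sum_(i <- r | P i) x ** F i.
Proof. exact: (morph_add_sum (rmulDr x) r P F). Qed.

Lemma Re_sum e I (r : seq I) (P : pred I) (F : I -> R) :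
  (forall i, P i -> in_Re mul e (F i)) -> in_Re mul e (\sum_(i <- r | P i) F i).
Proof.
move=> ReF; apply: big_ind ReF; first by exists 0; rewrite rmul0l.
by move=> _ _ [x ->] [y ->]; exists (x + y); rewrite rmulDl.
Qed.

Lemma Re_mul e a y : in_Re mul e y -> in_Re mul e (a ** y).
Proof. by case=> x ->; exists (a ** x); rewrite rmulA. Qed.

Lemma fRe_Re f e y : in_fRe mul f e y -> in_Re mul e y.
Proof. by case=> x ->; exists (f ** x). Qed.

Lemma hactM r s psi : hact mul (r ** s) psi = hact mul r (hact mul s psi).
Proof. by apply: funext => x; rewrite /hact rmulA. Qed.

Lemma hactDl r s psi : {morph psi : x y / x + y} ->
  hact mul (r + s) psi = hadd (hact mul r psi) (hact mul s psi).
Proof. by move=> psiD; apply: funext => x; rewrite /hact /hadd rmulDr psiD. Qed.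

Definition regular_mod : lmodule R := @LModule R R mul.

Lemma regular_lmod : is_lmod mul (fun _ => True) regular_mod.
Proof.
split; first by move=> a x y _; apply: rmulDr.
by split=> a b x _ _ /=; [apply: rmulDl | rewrite rmulA].
Qed.

Lemma regular_unitary : enough_idempotents mul -> unitary (fun _ => True) regular_mod.
Proof.
case=> I [q [_ [_ [[gen _] _]]]] m; have [n [a [x [Rqx ->]]]] := gen m.
have [r Er] := fin_all_exists (fun i => Rqx i : exists r, x i = r ** q (a i)).
by exists n, r, (fun i => q (a i)); split=> //; apply: eq_bigr => i _; apply: Er.
Qed.

Section Idempotent.
Variable f : R.
Hypothesis ff : f ** f = f.
Local Notation fR := (in_fR mul f).
Local Notation fRf := (in_fRf mul f).
Local Notation rho := (Defs.rho mul f).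

Lemma fR_id y : fR y -> f ** y = y.
Proof. by case=> r ->; rewrite rmulA ff. Qed.

Lemma fRf_fR a : fRf a -> fR a.
Proof. by case=> r ->; exists (r ** f); rewrite rmulA. Qed.

Lemma fRf_idr a : fRf a -> a ** f = a.
Proof. by case=> r ->; rewrite -rmulA ff. Qed.

Lemma fRe_fR e y : in_fRe mul f e y -> fR y.
Proof. by case=> r ->; exists (r ** e); rewrite !rmulA. Qed.

Lemma rmulff x : x ** f ** f = x ** f.
Proof. by rewrite -rmulA ff. Qed.

Lemma fRf_fxf x : fRf (f ** x ** f).
Proof. by exists x. Qed.

Lemma fRf_fxyf x y : fRf (f ** x ** y ** f).
Proof. by exists (x ** y); rewrite !rmulA. Qed.

Section Hom.
Variables (X : R -> Prop) (psi : R -> R).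
Hypothesis hom : is_hom mul f X psi.

Lemma hom_proj x : psi (f ** x) = psi x.
Proof. by case: hom => proj _; rewrite [RHS]proj. Qed.

Lemma hom_additive : {morph psi : x y / x + y}.
Proof.
case: hom => proj [fRD _] x y.
by rewrite proj rmulDr fRD -?proj //; [exists x | exists y].
Qed.

Lemma hom_fRf_linear a x : fRf a -> psi (a ** x) = a ** psi x.
Proof.
case: hom => _ [_ [lin _]] fRfa.
by rewrite -[a in a ** x]fRf_idr // -rmulA lin ?hom_proj //; exists x.
Qed.

Lemma hom_val x : X (psi x).
Proof. by case: hom => _ [_ [_ val]]; rewrite -hom_proj; apply: val; exists x. Qed.
End Hom.

Lemma RHom_fRf_linear X v a z :
  in_RHom mul f X v -> fRf a -> v (a ** z) = a ** v z.
Proof.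
case=> n [r [psi [hom Ev]]] fRfa; rewrite !Ev rmul_sumr; apply: eq_bigr => i _.
by rewrite /hact -rmulA (hom_fRf_linear (hom i)).
Qed.

Lemma RHom_fR_id X v z : (forall y, X y -> f ** y = y) ->
  in_RHom mul f X v -> f ** v z = v z.
Proof.
move=> Xid [n [r [psi [hom Ev]]]]; rewrite !Ev rmul_sumr; apply: eq_bigr => i _.
exact/Xid/(hom_val (hom i)).
Qed.

Lemma proj_is_hom : is_hom mul f fR (mul f).
Proof.
split; first by move=> x; rewrite rmulA ff.
split; first by move=> x y _ _; apply: rmulDr.
split; last by move=> x _; exists x.
by move=> a x fRfa _; rewrite !rmulA (fR_id (fRf_fR fRfa)) (fRf_idr fRfa).
Qed.

Lemma rho_RHom r : in_RHom mul f fR (rho r).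
Proof.
exists 1%N, (fun=> r), (fun=> mul f); split=> [_|x]; first exact: proj_is_hom.
by rewrite big_ord1 /hact /Defs.rho rmulA.
Qed.

Lemma rhoD r s : rho (r + s) = hadd (rho r) (rho s).
Proof. by apply: funext => x; apply: rmulDr. Qed.

Lemma rhoM r s : rho (r ** s) = hmul (rho r) (rho s).
Proof. by apply: funext => x; rewrite /hmul /Defs.rho !rmulA ff. Qed.

Lemma rho0 : rho 0 = @hzero R.
Proof. by apply: funext => x; apply: rmul0r. Qed.

Lemma hact_rho a y : hact mul a (rho y) = rho (a ** y).
Proof. by apply: funext => x; rewrite /hact /Defs.rho !rmulA. Qed.

Lemma hmul_rho_RHom v t : in_RHom mul f fR v ->
  hmul (rho (f ** t)) v = rho (v t).
Proof.
move=> Hv; apply: funext => x; rewrite /hmul /Defs.rho.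
rewrite [_ ** (f ** t)]rmulA (RHom_fRf_linear _ Hv (fRf_fxf x)).
by rewrite -rmulA (RHom_fR_id _ fR_id Hv).
Qed.

Definition in_RfR m := exists s : seq (R * R), m = \sum_(p <- s) p.1 ** (f ** p.2).

Lemma RfR0 : in_RfR 0.
Proof. by exists [::]; rewrite big_nil. Qed.

Lemma RfRB m m' : in_RfR m -> in_RfR m' -> in_RfR (m - m').
Proof.
move=> [s ->] [s' ->]; exists (s ++ [seq (- p.1, p.2) | p <- s']).
by rewrite big_cat big_map -sumrN; congr (_ + _); apply: eq_bigr => p _; rewrite rmulNl.
Qed.

Definition RfR := ZmodProp RfR0 RfRB.

Lemma RfR_mul a m : RfR m -> RfR (a ** m).
Proof.
case=> s ->; exists [seq (a ** p.1, p.2) | p <- s].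
by rewrite big_map rmul_sumr; apply: eq_bigr => p _; rewrite rmulA.
Qed.

Lemma proj_RfR y : RfR (f ** y).
Proof. by exists [:: (f, y)]; rewrite big_seq1 rmulA ff. Qed.

Definition RfR_mod := submod RfR_mul.

Lemma RfR_lmod : is_lmod mul (fun _ => True) RfR_mod.
Proof.
apply: is_lmod_submod => a *; [exact: rmulDr | exact: rmulDl | exact/esym/rmulA].
Qed.

Lemma RfR_unitary : unitary (fun _ => True) RfR_mod.
Proof.
apply: unitary_submod => _ [s ->].
exists (size s), (fun i => (nth (0, 0) s i).1), (fun i => f ** (nth (0, 0) s i).2).
by split=> // [i|]; [apply: proj_RfR | rewrite (big_nth (0, 0)) big_mkord].
Qed.

Section Tensor.
Variable X : lmodule R.
Hypothesis HX : is_lmod mul fRf X.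

Lemma mactD a : fRf a -> {morph @mact R X a : m m' / m + m'}.
Proof. by case: HX => actD _ fRfa m m'; apply: actD. Qed.

Lemma mactDl a b (m : mcar X) : fRf a -> fRf b -> mact (a + b) m = mact a m + mact b m.
Proof. by case: HX => _ [actDl _]; apply: actDl. Qed.

Lemma mactM a b (m : mcar X) : fRf a -> fRf b -> mact (a ** b) m = mact a (mact b m).
Proof. by case: HX => _ [_ actM]; apply: actM. Qed.

(* [tensor_mod X] stands for Rf ⊗_{fRf} X, with r f ⊗ b represented by the map
   x |-> (f x r f) b. Being made of functions, it turns monomorphisms X -> Y into
   monomorphisms, as the transfer of injectivity needs. *)
Definition in_tensor (phi : R -> mcar X) := exists s : seq (R * mcar X),
  forall x, phi x = \sum_(p <- s) mact (f ** x ** p.1 ** f) p.2.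

Lemma tensor0 : in_tensor 0.
Proof. by exists [::] => x; rewrite big_nil. Qed.

Lemma tensorB phi phi' : in_tensor phi -> in_tensor phi' -> in_tensor (phi - phi').
Proof.
move=> [s Es] [s' Es']; exists (s ++ [seq (p.1, - p.2) | p <- s']) => x.
rewrite big_cat big_map -[LHS]/(phi x - phi' x) Es Es' -sumrN.
by congr (_ + _); apply: eq_bigr => p _; rewrite (morph_addN (mactD (fRf_fxyf x p.1))).
Qed.

Definition tensor_prop := ZmodProp tensor0 tensorB.

Definition tensor_act a (phi : R -> mcar X) : R -> mcar X := fun x => phi (x ** a).

Lemma tensor_actP a phi : tensor_prop phi -> tensor_prop (tensor_act a phi).
Proof.
case=> s Es; exists [seq (a ** p.1, p.2) | p <- s] => x.
by rewrite /tensor_act Es big_map; apply: eq_bigr => p _; rewrite !rmulA.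
Qed.

Definition tensor_mod := submod tensor_actP.

Lemma tensor_additive phi : tensor_prop phi -> {morph phi : x y / x + y}.
Proof.
case=> s Es x y; rewrite !Es -big_split; apply: eq_bigr => p _.
by rewrite rmulDr !rmulDl mactDl //; apply: fRf_fxyf.
Qed.

Lemma tensor_lmod : is_lmod mul (fun _ => True) tensor_mod.
Proof.
apply: is_lmod_submod => // a b phi _ _.
  move=> Pphi; apply: funext => x.
  by rewrite /tensor_act rmulDr (tensor_additive Pphi).
by move=> _; apply: funext => x; rewrite /tensor_act rmulA.
Qed.

Definition tensor_elem (b : mcar X) : R -> mcar X := fun x => mact (f ** x ** f) b.

Lemma tensor_elemP b : tensor_prop (tensor_elem b).
Proof. by exists [:: (f, b)] => x; rewrite big_seq1 -[f ** x ** f ** f]rmulA ff. Qed.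

Lemma tensor_unitary : unitary (fun _ => True) tensor_mod.
Proof.
apply: unitary_submod => phi [s Es].
exists (size s), (fun i => (nth (0, 0) s i).1), (fun i => tensor_elem (nth (0, 0) s i).2).
split=> // [i|]; first exact: tensor_elemP.
apply: funext => x; rewrite Es (big_nth (0, 0)) big_mkord fct_sumE.
by apply: eq_bigr => i _; rewrite /tensor_act /tensor_elem !rmulA.
Qed.

Definition tensor_gen b : subzmod tensor_prop := insubzmod (tensor_elemP b).
End Tensor.

(* Meaningful on the image of [rho] only; elsewhere it is 0. *)
Definition rho_inv (u : R -> R) : R := xget 0 (fun y => u = rho y).

Hypothesis faithful : forall r, (forall s, f ** s ** r = 0) -> r = 0.

Lemma rho_inj : injective rho.
Proof.
move=> r s eq_rs; apply/eqP; rewrite -subr_eq0; apply/eqP; apply: faithful => x.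
by rewrite rmulDr rmulNr -[_ ** r]/(rho r x) eq_rs subrr.
Qed.

Lemma rho_invK : cancel rho rho_inv.
Proof. by move=> y; apply: xget_unique => // z /rho_inj ->. Qed.

Lemma rho_left_quotient_ring :
  left_quotient_ring (in_RHom mul f fR) (fun u => exists r, u = rho r).
Proof.
move=> D _ DQ _ _ _ _ g gQ _ gM g0 u Du; apply: funext => t; rewrite /hzero.
apply: rho_inj; rewrite rho0 -(hmul_rho_RHom t (gQ u Du)) -gM //; last by exists (f ** t).
by rewrite (hmul_rho_RHom t (DQ u Du)); apply: g0; exists (u t).
Qed.

Section InjectiveRe.
Variable e : R.
Hypothesis Re_inj : injective_submod mul (fun _ => True) (in_Re mul e).
Local Notation Re := (in_Re mul e).
Local Notation fRe := (in_fRe mul f e).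
Hypothesis EI : enough_idempotents mul.

Lemma rho_inv_mhom_to (M : lmodule R) (T : mcar M -> R -> R) :
  (forall m, exists2 y, Re y & T m = rho y) ->
  (forall m m', T (m + m') = hadd (T m) (T m')) ->
  (forall a m, T (mact a m) = hact mul a (T m)) ->
  is_mhom_to mul (fun _ => True) Re (fun m => rho_inv (T m)).
Proof.
move=> TRe TD TM; split; first by move=> m; have [y Rey ->] := TRe m; rewrite rho_invK.
split; last by move=> a m _; rewrite TM; have [y _ ->] := TRe m; rewrite hact_rho !rho_invK.
move=> m m'; have [y _ Ey] := TRe m; have [y' _ Ey'] := TRe m'.
by rewrite TD Ey Ey' -rhoD !rho_invK.
Qed.

Section HomRepresentation.
Variable psi : R -> R.
Hypothesis hom : is_hom mul f fRe psi.

Lemma hom_mul_proj x s : psi (x ** (f ** s)) = f ** x ** psi s.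
Proof.
rewrite -(hom_proj hom) !rmulA (hom_fRf_linear hom _ (fRf_fxf x)).
by rewrite -rmulA (fR_id (fRe_fR (hom_val hom s))).
Qed.

Lemma hact_RfR m : RfR m -> exists2 y, Re y & hact mul m psi = rho y.
Proof.
case=> s ->; exists (\sum_(p <- s) p.1 ** psi p.2).
  by apply: Re_sum => p _; apply/Re_mul/fRe_Re/(hom_val hom).
apply: funext => x; rewrite /hact /Defs.rho !rmul_sumr (morph_add_sum (hom_additive hom)).
by apply: eq_bigr => p _; rewrite rmulA hom_mul_proj !rmulA.
Qed.

Lemma hom_fRe_hact_rho r : exists2 y, Re y & hact mul r psi = rho y.
Proof.
pose T (m : subzmod RfR) := hact mul (val m) psi.
have valP : is_mhom (fun _ => True) (M := RfR_mod) (N := regular_mod) val by [].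
have TP : is_mhom_to mul (fun _ => True) Re (M := RfR_mod) (fun m => rho_inv (T m)).
  apply: rho_inv_mhom_to => [m | m m' | a m]; first exact: hact_RfR (subzmodP m).
    exact: hactDl (hom_additive hom).
  exact: hactM.
have [h [[hRe [_ hM]] hext]] :=
  Re_inj RfR_lmod RfR_unitary regular_lmod (regular_unitary EI) valP val_inj TP.
exists (h r) => //; apply: funext => x.
have hx : h (f ** x ** r) = f ** x ** h r := hM (f ** x) r I.
have hact_proj : hact mul (f ** (x ** r)) psi = rho (psi (x ** r)).
  by apply: funext => z; apply: hom_mul_proj.
have := hext (insubzmod (proj_RfR (x ** r))); rewrite /T /= hact_proj rho_invK.
by rewrite /Defs.rho -hx rmulA.
Qed.
End HomRepresentation.

Lemma RHom_fRe_rho phi : in_RHom mul f fRe phi -> exists2 y, Re y & phi = rho y.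
Proof.
case=> n [r [psi [hom Ephi]]].
have [y Rey Ey] := fin_all_exists2 (fun i => hom_fRe_hact_rho (hom i) (r i)).
exists (\sum_(i < n) y i); first exact: Re_sum.
by apply: funext => x; rewrite Ephi /Defs.rho rmul_sumr; apply: eq_bigr => i _; rewrite Ey.
Qed.

Section TensorExtension.
Variables (A B : lmodule R) (i : mcar A -> mcar B) (g : mcar A -> R).
Hypotheses (HA : is_lmod mul fRf A) (HB : is_lmod mul fRf B).
Hypotheses (i_mhom : is_mhom fRf i) (i_inj : injective i).
Hypothesis g_mhom : is_mhom_to mul fRf fRe g.

Lemma tensor_map_subproof (phi : subzmod (tensor_prop HA)) :
  tensor_prop HB (fun x => i (val phi x)).
Proof.
case: (subzmodP phi) => s Es; exists [seq (p.1, i p.2) | p <- s] => x.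
case: i_mhom => iD iM; rewrite Es (morph_add_sum iD) big_map.
by apply: eq_bigr => p _; apply/iM/fRf_fxyf.
Qed.

Definition tensor_map phi := insubzmod (tensor_map_subproof phi).

Lemma tensor_map_mhom :
  is_mhom (fun _ => True) (M := tensor_mod HA) (N := tensor_mod HB) tensor_map.
Proof.
case: i_mhom => iD _; split=> [phi phi' | a phi _]; apply: val_inj => //.
by apply: funext => x; apply: iD.
Qed.

Lemma tensor_map_inj : injective tensor_map.
Proof.
move=> phi phi' /(congr1 val) Ei; apply: val_inj; apply: funext => x; apply: i_inj.
exact: (congr1 (fun u => u x) Ei).
Qed.

Lemma tensor_gen_map a : tensor_gen HB (i a) = tensor_map (tensor_gen HA a).
Proof. by case: i_mhom => _ iM; apply: val_inj; apply: funext => x; apply/esym/iM/fRf_fxf. Qed.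

Lemma tensor_comp_rho (phi : subzmod (tensor_prop HA)) :
  exists2 y, Re y & (fun x => g (val phi x)) = rho y.
Proof.
case: g_mhom (subzmodP phi) => gfRe [gD gM] [s Es].
exists (\sum_(p <- s) p.1 ** g p.2); first by apply: Re_sum => p _; apply/Re_mul/fRe_Re/gfRe.
apply: funext => x; rewrite Es (morph_add_sum gD) /Defs.rho rmul_sumr.
apply: eq_bigr => p _; rewrite gM; last exact: fRf_fxyf.
by rewrite -rmulA (fR_id (fRe_fR (gfRe _))) !rmulA.
Qed.

Lemma rho_inv_tensor_gen a : rho_inv (fun x => g (val (tensor_gen HA a) x)) = g a.
Proof.
case: g_mhom => gfRe [_ gM]; rewrite -[RHS]rho_invK; congr rho_inv.
apply: funext => x; rewrite /= gM; last exact: fRf_fxf.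
by rewrite -rmulA (fR_id (fRe_fR (gfRe _))).
Qed.

Lemma tensor_extension :
  exists h : mcar B -> R, is_mhom_to mul fRf fRe h /\ forall a, h (i a) = g a.
Proof.
have TP : is_mhom_to mul (fun _ => True) Re (M := tensor_mod HA)
    (fun phi => rho_inv (fun x => g (val phi x))).
  apply: rho_inv_mhom_to => [|phi phi'|//]; first exact: tensor_comp_rho.
  by apply: funext => x; case: g_mhom => _ [gD _]; apply: gD.
have [h [[hRe [hD hM]] hext]] := Re_inj (tensor_lmod HA) (@tensor_unitary _ HA)
  (tensor_lmod HB) (@tensor_unitary _ HB) tensor_map_mhom tensor_map_inj TP.
exists (fun b => f ** h (tensor_gen HB b)); split; last first.
  move=> a; rewrite tensor_gen_map hext rho_inv_tensor_gen.
  by case: g_mhom => gfRe _; apply/fR_id/fRe_fR/gfRe.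
split; first by move=> b; case: (hRe (tensor_gen HB b)) => y ->; exists y; rewrite rmulA.
split=> [b b' | c b fRfc].
  rewrite -rmulDr -hD; congr (f ** h _); apply: val_inj; apply: funext => x.
  exact: (mactD HB (fRf_fxf x)).
have -> : tensor_gen HB (mact c b) = @mact R (tensor_mod HB) c (tensor_gen HB b).
  apply: val_inj; apply: funext => x; rewrite /= /tensor_act /tensor_elem.
  by rewrite -(mactM HB b (fRf_fxf x) fRfc); case: fRfc => t ->; rewrite !rmulA !rmulff.
by rewrite (hM c _ I); case: fRfc => t ->; rewrite !rmulA ff rmulff.
Qed.
End TensorExtension.

Lemma rho_is_hom : is_hom mul f fRe (rho e).
Proof.
split; first by move=> x; rewrite /Defs.rho rmulA ff.
split; first by move=> x y _ _; rewrite /Defs.rho rmulDr rmulDl.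
split; last by move=> x _; exists x.
by move=> a x fRfa _; rewrite /Defs.rho !rmulA (fR_id (fRf_fR fRfa)) (fRf_idr fRfa).
Qed.

Lemma rho_Re_RHom y : e ** e = e -> Re y -> in_RHom mul f fRe (rho y).
Proof.
move=> ee [r ->]; exists 1%N, (fun=> r ** e), (fun=> rho e).
by split=> [_|x]; [exact: rho_is_hom | rewrite big_ord1 hact_rho -rmulA ee].
Qed.

Lemma fRe_injective : injective_submod mul fRf fRe.
Proof. by move=> A B HA _ HB _ i i_mhom i_inj g g_mhom; exact: tensor_extension. Qed.
End InjectiveRe.
End Idempotent.
End Rng.

Theorem lemma4p1 (R : zmodType) (mul : R -> R -> R) (f : R) :
  rng_axioms mul -> enough_idempotents mul ->
  mul f f = f ->
  (forall r : R, (forall s : R, mul (mul f s) r = 0) -> r = 0) ->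
  ((forall r, in_RHom mul f (in_fR mul f) (rho mul f r)) /\
   (forall r s x, rho mul f (r + s) x = hadd (rho mul f r) (rho mul f s) x) /\
   (forall r s x, rho mul f (mul r s) x = hmul (rho mul f r) (rho mul f s) x) /\
   (forall r s, rho mul f r = rho mul f s -> r = s) /\
   left_quotient_ring (in_RHom mul f (in_fR mul f))
                      (fun u => exists r, u = rho mul f r)) /\
  (forall e : R, mul e e = e ->
     injective_submod mul (fun _ => True) (in_Re mul e) ->
     (exists Phi : (R -> R) -> R,
        (forall phi, in_RHom mul f (in_fRe mul f e) phi -> in_Re mul e (Phi phi)) /\
        (forall phi psi, in_RHom mul f (in_fRe mul f e) phi ->
           in_RHom mul f (in_fRe mul f e) psi -> Phi (hadd phi psi) = Phi phi + Phi psi) /\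
        (forall r phi, in_RHom mul f (in_fRe mul f e) phi ->
           Phi (hact mul r phi) = mul r (Phi phi)) /\
        (forall phi psi, in_RHom mul f (in_fRe mul f e) phi ->
           in_RHom mul f (in_fRe mul f e) psi -> Phi phi = Phi psi -> phi = psi) /\
        (forall y, in_Re mul e y ->
           exists phi, in_RHom mul f (in_fRe mul f e) phi /\ Phi phi = y)) /\
     injective_submod mul (in_fRf mul f) (in_fRe mul f e)).
Proof.
move=> ax EI ff faithful; split.
  split; first exact: rho_RHom.
  split; first by move=> r s x; rewrite rhoD.
  split; first by move=> r s x; rewrite rhoM.
  by split; [exact: rho_inj | exact: rho_left_quotient_ring].
move=> e ee Re_inj; split; last exact: fRe_injective.
have rep := RHom_fRe_rho ax ff faithful Re_inj EI.
have rho_invK := rho_invK ax faithful.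
exists (rho_inv mul f); split; first by move=> _ /rep [y Rey ->]; rewrite rho_invK.
split; first by move=> _ _ /rep [y _ ->] /rep [z _ ->]; rewrite -(rhoD ax) !rho_invK.
split; first by move=> r _ /rep [y _ ->]; rewrite (hact_rho ax) !rho_invK.
split; first by move=> _ _ /rep [y _ ->] /rep [z _ ->]; rewrite !rho_invK => ->.
by move=> y Rey; exists (rho mul f y); rewrite rho_invK; split=> //; apply: rho_Re_RHom.
Qed.
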